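(* For $n \ge 3$, $\dim_{1,f}(C_n)=\frac{n}{2}$ if $n \in \{3,4\}$, and $\dim_{1,f}(C_n)=\frac{n}{4}$ if $n \ge 5$.
   Context: $C_n$ is the cycle on $n$ vertices. $d(x,y)$ is the distance in $G$. $d_1(x,y)=\min\{d(x,y),2\}$ and $R_1\{x,y\}=\{z\in V(G): d_1(x,z)\neq d_1(y,z)\}$. For a function $g$ on $V(G)$ and $U\subseteq V(G)$, $g(U)=\sum_{s\in U}g(s)$. A function $h:V(G)\to[0,1]$ is a $1$-truncated resolving function of $G$ if $h(R_1\{x,y\})\ge 1$ for all distinct $x,y\in V(G)$; $\dim_{1,f}(G)$ is the minimum of $h(V(G))$ over all such $h$. *)

From mathcomp Require Import all_boot all_order all_algebra.
Set Implicit Arguments. Unset Strict Implicit. Unset Printing Implicit Defensive.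
Import Order.TTheory GRing.Theory Num.Theory.
Local Open Scope ring_scope.

(* The cycle C_n on vertex set 'I_n (i adjacent to i+1 mod n).
   Its graph distance: d(x,y) = min(|x-y|, n-|x-y|). *)
Definition cycle_dist (n : nat) (x y : 'I_n) : nat :=
  let k := (maxn x y - minn x y)%N in minn k (n - k)%N.

Definition cycle_dist1 (n : nat) (x y : 'I_n) : nat := minn (cycle_dist x y) 2.

Definition R1 (n : nat) (x y : 'I_n) : {set 'I_n} :=
  [set z | cycle_dist1 x z != cycle_dist1 y z].

Definition fsum (R : numDomainType) (n : nat) (g : 'I_n -> R) (U : {set 'I_n}) : R :=
  \sum_(s in U) g s.

Definition trunc1_resolving (R : numDomainType) (n : nat) (h : 'I_n -> R) : Prop :=
  (forall v, 0 <= h v <= 1) /\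
  (forall x y : 'I_n, x != y -> 1 <= fsum h (R1 x y)).

Definition is_dim1f (R : numDomainType) (n : nat) (v : R) : Prop :=
  (exists h : 'I_n -> R, trunc1_resolving h /\ fsum h [set: 'I_n] = v) /\
  (forall h : 'I_n -> R, trunc1_resolving h -> v <= fsum h [set: 'I_n]).

From mathcomp Require Import all_boot all_order all_algebra.
From mathcomp Require Import zify.
Set Implicit Arguments. Unset Strict Implicit. Unset Printing Implicit Defensive.
Import Order.TTheory GRing.Theory Num.Theory.
Local Open Scope ring_scope.

(* The uniform weight 1/k is a 1-truncated resolving function as soon as every
   R_1{x,y} has at least k elements: k = 2 always (x and y themselves), and
   k = 4 when n >= 5 (x, y, the predecessor of x and the successor of y, after
   possibly swapping x and y).  Conversely, for a resolving h, sum the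
   inequalities h(R_1{x, p x}) >= 1 over all x, with p x = x + 2 if n = 4 and
   p x = x + 1 otherwise: R_1{x, p x} is {x, p x} when n <= 4 and
   {x - 1, x, x + 1, x + 2} when n >= 5, so every vertex is counted at most k
   times and n <= k h(V). *)

Lemma card_ler_mul_sum (R : numDomainType) (T : finType) (h : T -> R)
    (A : T -> {set T}) (k : nat) :
  (forall v, 0 <= h v) -> (forall x, 1 <= \sum_(z in A x) h z) ->
  (forall z, #|[set x | z \in A x]| <= k)%N ->
  #|T|%:R <= k%:R * \sum_z h z.
Proof.
move=> h_ge0 A_ge1 mult_le_k.
have -> : #|T|%:R = \sum_(x : T) 1 :> R by rewrite sumr_const.
apply: (@le_trans _ _ (\sum_x \sum_(z in A x) h z)); first exact: ler_sum.
rewrite (exchange_big_dep predT) //= mulr_sumr; apply: ler_sum => z _.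
rewrite sumr_const -[_ *+ _]mulr_natl ler_wpM2r // ler_nat.
by apply: leq_trans (mult_le_k z); rewrite cardsE.
Qed.

Lemma trunc1_resolving_lower_bound (R : numDomainType) n (h : 'I_n -> R)
    (p : 'I_n -> 'I_n) (k : nat) :
  trunc1_resolving h -> (forall x, p x != x) ->
  (forall z, #|[set x | z \in R1 x (p x)]| <= k)%N ->
  n%:R <= k%:R * fsum h [set: 'I_n].
Proof.
case=> h01 h_res p_neq mult_le_k.
have -> : fsum h [set: 'I_n] = \sum_z h z by apply: eq_bigl => z; rewrite inE.
rewrite -[in n%:R](card_ord n); apply: card_ler_mul_sum mult_le_k.
  by move=> v; case/andP: (h01 v).
by move=> x; apply: h_res; rewrite eq_sym.
Qed.

Lemma is_dim1f_uniform (R : numFieldType) (n k : nat) : (0 < k)%N ->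
  (forall x y : 'I_n, x != y -> k <= #|R1 x y|)%N ->
  (forall h : 'I_n -> R, trunc1_resolving h -> n%:R <= k%:R * fsum h [set: 'I_n]) ->
  @is_dim1f R n (n%:R / k%:R).
Proof.
move=> k_gt0 card_R1_ge_k lower_bound.
have k_pos : 0 < k%:R :> R by rewrite ltr0n.
have kV_ge0 : 0 <= k%:R^-1 :> R by rewrite invr_ge0 ltW.
split=> [|h h_res]; last by rewrite mulrC ler_pdivrMl // lower_bound.
exists (fun=> k%:R^-1); split; last by rewrite /fsum sumr_const cardsT card_ord mulr_natl.
split=> [v|x y xy]; first by rewrite kV_ge0 invf_le1 // ler1n.
have k_le : k%:R <= #|R1 x y|%:R :> R by rewrite ler_nat card_R1_ge_k.
rewrite /fsum sumr_const -[_ *+ #|_|]mulr_natr.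
by apply: le_trans (ler_wpM2l kV_ge0 k_le); rewrite mulVf ?lt0r_neq0.
Qed.

Lemma val_ordS n (x : 'I_n) : ordS x = (if x.+1 == n then 0%N else x.+1) :> nat.
Proof.
rewrite /=; case: eqP => [->|]; first by rewrite modnn.
by move=> ?; rewrite modn_small //; have := ltn_ord x; lia.
Qed.

Lemma val_ord_pred n (x : 'I_n) :
  ord_pred x = (if x == 0 :> nat then n.-1 else x.-1) :> nat.
Proof.
rewrite /=; have := ltn_ord x; case: eqP => [->|x_neq0] x_lt_n.
  by rewrite add0n modn_small //; lia.
have -> : (x + n).-1 = (x.-1 + n)%N by lia.
by rewrite modnDr modn_small //; lia.
Qed.

Lemma eq_ordE n (x y : 'I_n) : (x == y) = (x == y :> nat).
Proof. by []. Qed.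

(* Destructing the ordinals hands their bounds to lia; the wrap-around of
   ordS and ord_pred is resolved by splitting innermost conditionals first. *)
Ltac ord_arith :=
  rewrite ?eq_ordE ?val_ordS ?val_ord_pred /=;
  repeat match goal with x : 'I_?m |- _ => case: x => [x ?] /= end;
  repeat match goal with |- context [if ?b then _ else _] =>
    lazymatch b with context [if _ then _ else _] => fail | _ => idtac end;
    case: (boolP b) => ? end;
  lia.

Lemma cycle_dist1E n (x z : 'I_n) : cycle_dist1 x z =
  if x == z then 0%N else if (ordS x == z) || (ordS z == x) then 1%N else 2%N.
Proof. rewrite /cycle_dist1 /cycle_dist; ord_arith. Qed.

Ltac R1_arith := rewrite /= ?inE ?cycle_dist1E; ord_arith.

Lemma R1_sym n (x y : 'I_n) : R1 x y = R1 y x.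
Proof. by apply/setP => z; rewrite !inE eq_sym. Qed.

Lemma mem_R1l n (x y : 'I_n) : x != y -> x \in R1 x y.
Proof. R1_arith. Qed.

Lemma mem_R1r n (x y : 'I_n) : x != y -> y \in R1 x y.
Proof. R1_arith. Qed.

Lemma mem_R1_pred n (x y : 'I_n) :
  x != y -> x != ordS (ordS y) -> ord_pred x \in R1 x y.
Proof. R1_arith. Qed.

Lemma mem_R1_succ n (x y : 'I_n) :
  x != y -> x != ordS (ordS y) -> ordS y \in R1 x y.
Proof. R1_arith. Qed.

Lemma uniq_pred_succ n (x y : 'I_n) : x != y -> x != ordS y -> x != ordS (ordS y) ->
  uniq [:: x; y; ord_pred x; ordS y].
Proof. R1_arith. Qed.

Lemma succ_notin_succ2 n (x y : 'I_n) : (5 <= n)%N ->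
  x \in [:: ordS y; ordS (ordS y)] -> y \notin [:: ordS x; ordS (ordS x)].
Proof. R1_arith. Qed.

Lemma ordS_neq n (x : 'I_n) : (1 < n)%N -> ordS x != x.
Proof. R1_arith. Qed.

Lemma ordS2_neq (x : 'I_4) : ordS (ordS x) != x.
Proof. R1_arith. Qed.

Lemma card_R1_ge2 n (x y : 'I_n) : x != y -> (2 <= #|R1 x y|)%N.
Proof.
move=> xy; have := cards2 x y; rewrite xy => <-.
by apply/subset_leq_card/subsetP => z /set2P[]->;
  [exact: mem_R1l | exact: mem_R1r].
Qed.

Lemma card_R1_ge4 n (x y : 'I_n) : (5 <= n)%N -> x != y -> (4 <= #|R1 x y|)%N.
Proof.
move=> n_ge5.
wlog x_far : x y / x \notin [:: ordS y; ordS (ordS y)] => [wlog_far xy|].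
  case: (boolP (x \in [:: ordS y; ordS (ordS y)])) => [x_near|x_far].
    by rewrite R1_sym wlog_far 1?eq_sym // succ_notin_succ2.
  exact: wlog_far.
move: x_far; rewrite !inE negb_or => /andP[x_nS x_nSS] xy.
rewrite -[4%N]/(size [:: x; y; ord_pred x; ordS y]).
rewrite -(card_uniqP (uniq_pred_succ xy x_nS x_nSS)).
apply/subset_leq_card/subsetP => z.
rewrite !in_cons in_nil orbF => /or4P[]/eqP->.
- exact: mem_R1l.
- exact: mem_R1r.
- exact: mem_R1_pred.
- exact: mem_R1_succ.
Qed.

Lemma card_R1_succ_preim3 (z : 'I_3) : (#|[set x | z \in R1 x (ordS x)]| <= 2)%N.
Proof.
apply: leq_trans (card_size [:: z; ord_pred z]).
by apply/subset_leq_card/subsetP => x; R1_arith.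
Qed.

Lemma card_R1_succ2_preim4 (z : 'I_4) :
  (#|[set x | z \in R1 x (ordS (ordS x))]| <= 2)%N.
Proof.
apply: leq_trans (card_size [:: z; ordS (ordS z)]).
by apply/subset_leq_card/subsetP => x; R1_arith.
Qed.

Lemma card_R1_succ_preim n : (5 <= n)%N ->
  forall z : 'I_n, (#|[set x | z \in R1 x (ordS x)]| <= 4)%N.
Proof.
move=> n_ge5 z.
apply: leq_trans (card_size [:: ordS z; z; ord_pred z; ord_pred (ord_pred z)]).
by apply/subset_leq_card/subsetP => x; R1_arith.
Qed.

Theorem corollary3p5 (R : realFieldType) (n : nat) (hn : (3 <= n)%N) :
  @is_dim1f R n (if (n <= 4)%N then n%:R / 2 else n%:R / 4).
Proof.
case: leqP => [n_le4 | n_ge5]; apply: is_dim1f_uniform => //.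
- exact: card_R1_ge2.
- move=> h h_res; have [n3|n4] : n = 3%N \/ n = 4%N by lia.
  + subst n; apply: (trunc1_resolving_lower_bound (k := 2) h_res _ card_R1_succ_preim3).
    by move=> x; rewrite ordS_neq.
  + subst n.
    exact: (trunc1_resolving_lower_bound (k := 2) h_res ordS2_neq card_R1_succ2_preim4).
- by move=> x y; apply: card_R1_ge4.
- move=> h h_res.
  apply: (trunc1_resolving_lower_bound (k := 4) h_res _ (card_R1_succ_preim n_ge5)).
  by move=> x; rewrite ordS_neq // ltnW.
Qed.
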